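(* Suppose $J_1=J_2=J>0$ and $\Delta<1$. There exists a constant $c\in(0,\infty)$ (independent of $N$, $\theta$, $\Delta$) such that for every configuration $\mathbf S$ of the form $\mathbf S_{\boldsymbol r}=(\cos(\theta+\vartheta_{\boldsymbol r}),\sin(\theta+\vartheta_{\boldsymbol r}))$ with $\vartheta_{\boldsymbol r}\in(-\pi,\pi]$ and $|\mathbf S_{\boldsymbol r}-\boldsymbol e(\theta)|<\Delta$ for all $\boldsymbol r\in\mathbb T_N$, $$\bigl|\mathcal H_N(\mathbf S)+J|\mathbb T_N|-J\,G_{N,\theta}(\boldsymbol\vartheta)\bigr|\le cJ|\mathbb T_N|\Delta^3.$$
   Context: Torus model: $N$ even, $\mathbb T_N=(\mathbb Z/N\mathbb Z)^2$; $\langle \boldsymbol r,\boldsymbol r+\boldsymbol e_1\rangle$ is an $x$-edge if $r_1$ is even, a $z$-edge otherwise; $\langle\boldsymbol r,\boldsymbol r+\boldsymbol e_2\rangle$ is an $x$-edge if $r_2$ is even, a $z$-edge otherwise. $\mathcal H_N(\mathbf S)=-J\sum_{x\text{-edges}}S^x_{\boldsymbol r}S^x_{\boldsymbol r'}-J\sum_{z\text{-edges}}S^z_{\boldsymbol r}S^z_{\boldsymbol r'}$ for unit vectors $\mathbf S_{\boldsymbol r}=(S^x_{\boldsymbol r},S^z_{\boldsymbol r})$. $\boldsymbol e(\theta)=(\cos\theta,\sin\theta)$. For $\boldsymbol\vartheta=(\vartheta_{\boldsymbol r})$, $G_{N,\theta}(\boldsymbol\vartheta)=\frac12\sum_{x\text{-edges}\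 \langle\boldsymbol r,\boldsymbol r'\rangle}(\vartheta_{\boldsymbol r}-\vartheta_{\boldsymbol r'})^2\sin^2\theta+\frac12\sum_{z\text{-edges}\ \langle\boldsymbol r,\boldsymbol r'\rangle}(\vartheta_{\boldsymbol r}-\vartheta_{\boldsymbol r'})^2\cos^2\theta$. *)

From HB Require Import structures.
From mathcomp Require Import all_boot all_order all_algebra.
From mathcomp Require Import all_classical all_reals all_analysis.
Set Implicit Arguments. Unset Strict Implicit. Unset Printing Implicit Defensive.
Import Order.TTheory GRing.Theory Num.Theory.
Local Open Scope ring_scope.

Definition site (N : nat) := ('I_N * 'I_N)%type.

Definition nb1 N (r : site N) : site N := (ordS r.1, r.2).
Definition nb2 N (r : site N) : site N := (r.1, ordS r.2).

Definition xedge1 N (r : site N) : bool := ~~ odd r.1.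
Definition xedge2 N (r : site N) : bool := ~~ odd r.2.

(* Spins are pairs (S^x, S^z). *)
Definition bond (R : realType) (isx : bool) (s s' : R * R) : R :=
  if isx then s.1 * s'.1 else s.2 * s'.2.

Definition HN (R : realType) N (J : R) (S : site N -> R * R) : R :=
  - J * \sum_(r : site N)
      (bond (xedge1 r) (S r) (S (nb1 r)) + bond (xedge2 r) (S r) (S (nb2 r))).

Definition gw (R : realType) (isx : bool) (theta : R) : R :=
  if isx then (sin theta) ^+ 2 else (cos theta) ^+ 2.

Definition GN (R : realType) N (theta : R) (vt : site N -> R) : R :=
  2^-1 * \sum_(r : site N)
     (gw (xedge1 r) theta * (vt r - vt (nb1 r)) ^+ 2
      + gw (xedge2 r) theta * (vt r - vt (nb2 r)) ^+ 2).

Definition evec (R : realType) (theta : R) : R * R := (cos theta, sin theta).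

Definition dist2 (R : realType) (a b : R * R) : R :=
  Num.sqrt ((a.1 - b.1) ^+ 2 + (a.2 - b.2) ^+ 2).

From HB Require Import structures.
From mathcomp Require Import all_boot all_order all_algebra.
From mathcomp Require Import all_classical all_reals all_analysis.
From mathcomp Require Import ring lra.
Set Implicit Arguments. Unset Strict Implicit. Unset Printing Implicit Defensive.
Import Order.TTheory GRing.Theory Num.Theory.
Import numFieldNormedType.Exports.
Local Open Scope ring_scope.

(* Write S_r = e(th + a_r).  A deviation |S_r - e(th)| < D < 1 forces |a_r| <= 2D.
   Expanding sin and cos to second order, minus the energy of a bond of type x
   (resp. z) is the Gaussian term (1/2) sin^2 th (a - a')^2 (resp. cos^2 th),
   plus one term for each endpoint, up to O(D^3).  Along each lattice direction
   a site is the endpoint of one x-bond and one z-bond, because types alternate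
   with parity on the even torus, and the two endpoint terms then add up to the
   constant -1/2, so the endpoint terms sum to -|T_N|. *)

Section TrigTaylor.
Variable R : realType.
Implicit Types a d x : R.

Lemma MVT_from0 (f df : R -> R) x : (forall y : R, is_derive y 1 f (df y)) ->
  exists2 c, `|c| <= `|x| & f x - f 0 = df c * x.
Proof.
move=> fd.
have cf : continuous f.
  by move=> y; apply/differentiable_continuous/derivable1_diffP; apply: ex_derive.
have [x0|x0] := leP 0 x.
  have [c cI ->] := MVT_segment x0 (fun y _ => fd y) (continuous_subspaceT cf).
  exists c; last by rewrite subr0.
  by move: cI; rewrite in_itv /= => /andP[c0 cx]; rewrite !ger0_norm.
have [c cI E] := MVT_segment (ltW x0) (fun y _ => fd y) (continuous_subspaceT cf).
exists c; last by rewrite -opprB E sub0r mulrN opprK.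
by move: cI; rewrite in_itv /= => /andP[c0 cx]; rewrite !ler0_norm // ?lerN2 // ltW.
Qed.

Lemma abs_sin_le x : `|sin x| <= `|x|.
Proof.
have [c _] := MVT_from0 x (@is_derive_sin R).
rewrite sin0 subr0 => ->.
by rewrite normrM ler_piMl ?cos_max.
Qed.

Lemma abs_cosB1_le x : `|cos x - 1| <= x ^+ 2.
Proof.
have [c cx] := MVT_from0 x (@is_derive_cos R).
rewrite cos0 => ->.
rewrite normrM normrN -[x ^+ 2]ger0_norm ?sqr_ge0 // normrX expr2.
by rewrite ler_wpM2r // (le_trans (abs_sin_le c)).
Qed.

Lemma abs_sinB_le x : `|sin x - x| <= `|x| ^+ 3.
Proof.
have D (z : R) : is_derive z 1 (fun z => sin z - z) (cos z - 1) by apply: is_deriveB.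
have [c cx] := MVT_from0 x D.
rewrite sin0 !subr0 => ->.
rewrite normrM exprSr ler_wpM2r //.
apply: le_trans (abs_cosB1_le c) _.
by rewrite -[c ^+ 2]ger0_norm ?sqr_ge0 // normrX lerXn2r ?nnegrE.
Qed.

Lemma abs_cos_taylor2_le x : `|cos x - 1 + x ^+ 2 / 2| <= x ^+ 4.
Proof.
have D (z : R) : is_derive z 1 (fun z => cos z - 1 + z ^+ 2 / 2) (z - sin z).
  have -> : (fun z => cos z - 1 + z ^+ 2 / 2) =
      ((@cos R - cst 1) + (2^-1 : R) \*: (@id R * @id R)).
    by apply/funext => w /=; rewrite mulrC expr2.
  apply: is_derive_eq.
  by rewrite /= subr0 -[z%:A]/(z * 1) mulr1 -[2^-1 *: _]/(2^-1 * _); field.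
have [c cx] := MVT_from0 x D.
rewrite cos0 expr0n /= mul0r addr0 subrr subr0 => ->.
rewrite normrM -[x ^+ 4]ger0_norm ?exprn_even_ge0 // normrX exprSr ler_wpM2r //.
rewrite -normrN opprB; apply: le_trans (abs_sinB_le c) _.
by rewrite lerXn2r ?nnegrE.
Qed.

Lemma cos_le_norm x y : `|x| <= `|y| -> `|y| <= pi -> cos y <= cos x.
Proof.
move=> xy ypi; rewrite -(cos_norm x) -(cos_norm y) leNgt.
have x0pi : `|x| \in `[0, pi] by rewrite in_itv /= normr_ge0 (le_trans xy).
have y0pi : `|y| \in `[0, pi] by rewrite in_itv /= normr_ge0.
by rewrite (ltr_cos y0pi x0pi) -leNgt.
Qed.

Lemma abs_le_2sin a : `|a| <= pi -> 2^-1 < cos a -> `|a| <= 2 * `|sin a|.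
Proof.
move=> api ca.
have [c ca'] := MVT_from0 a (@is_derive_sin R).
rewrite sin0 subr0 => ->.
have cc : 2^-1 < cos c := lt_le_trans ca (cos_le_norm ca' api).
rewrite normrM (gtr0_norm (lt_trans _ cc)) ?invr_gt0 //.
have := normr_ge0 a; nra.
Qed.

Lemma small_angle_bounds a d : `|a| <= d -> d <= 2 ->
  [/\ `|sin a| <= d, `|cos a - 1| <= d ^+ 2, `|sin a - a| <= d ^+ 3
     & `|cos a - 1 + a ^+ 2 / 2| <= 2 * d ^+ 3].
Proof.
move=> ad d2; have d0 : 0 <= d := le_trans (normr_ge0 a) ad.
have aXd n : `|a| ^+ n <= d ^+ n by rewrite lerXn2r ?nnegrE.
split.
- exact: le_trans (abs_sin_le a) ad.
- by apply: le_trans (abs_cosB1_le a) _; rewrite -[a ^+ 2]ger0_norm ?sqr_ge0 // normrX.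
- exact: le_trans (abs_sinB_le a) (aXd 3).
apply: le_trans (abs_cos_taylor2_le a) _.
rewrite -[a ^+ 4]ger0_norm ?exprn_even_ge0 // normrX (le_trans (aXd 4)) //.
by rewrite [d ^+ 4]exprS ler_wpM2r ?exprn_ge0.
Qed.

End TrigTaylor.

Section SpinDeviation.
Variable R : realType.
Implicit Types th a : R.

Lemma dist2_evecD th a :
  dist2 (evec (th + a)) (evec th) = Num.sqrt (2 - 2 * cos a).
Proof.
rewrite /dist2 /evec /= cosD sinD; congr Num.sqrt.
transitivity ((cos th ^+ 2 + sin th ^+ 2) * (cos a ^+ 2 + sin a ^+ 2 + 1 - 2 * cos a)).
  by ring.
by rewrite !cos2Dsin2 mul1r; ring.
Qed.

Lemma abs_le_dist2_evec th a (D : R) : - pi < a <= pi -> D < 1 ->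
  dist2 (evec (th + a)) (evec th) < D -> `|a| <= 2 * D.
Proof.
move=> /andP[piLa aLpi] D1; rewrite dist2_evecD.
have cos_le1a := cos_le1 a; have cos_geN1a := cos_geN1 a.
have sqrt_ge0 := sqrtr_ge0 (2 - 2 * cos a).
have sqrtK : Num.sqrt (2 - 2 * cos a) ^+ 2 = 2 - 2 * cos a by rewrite sqr_sqrtr; lra.
move=> distD.
have cos_gt : 2^-1 < cos a by nra.
have sin_lt : `|sin a| < D.
  have : sin a ^+ 2 < D ^+ 2 by rewrite sin2cos2; nra.
  by rewrite -[sin a ^+ 2]ger0_norm ?sqr_ge0 // normrX ltr_pXn2r ?nnegrE //; lra.
have : `|a| <= 2 * `|sin a| by apply: abs_le_2sin => //; rewrite ler_norml; lra.
lra.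
Qed.

End SpinDeviation.

Section BondExpansion.
Variable R : realType.
Implicit Types c s th a b d : R.

(* The part of the second-order expansion of
   [-(c cos a - s sin a) (c cos b - s sin b)] depending on [a] alone. *)
Definition site_energy c s a : R :=
  - c ^+ 2 / 2 + a ^+ 2 / 2 * (c ^+ 2 - s ^+ 2) + c * s * a.

Lemma site_energy_rot c s a :
  site_energy c s a + site_energy s (- c) a = - (c ^+ 2 + s ^+ 2) / 2.
Proof. by rewrite /site_energy; field. Qed.

Lemma bond_expansion c s a b d :
  c ^+ 2 + s ^+ 2 = 1 -> `|a| <= d -> `|b| <= d -> d <= 2 ->
  `|- ((c * cos a - s * sin a) * (c * cos b - s * sin b))
    - 2^-1 * s ^+ 2 * (a - b) ^+ 2 - (site_energy c s a + site_energy c s b)|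
    <= 14 * d ^+ 3.
Proof.
move=> cs1 ad bd d2; have d0 : 0 <= d := le_trans (normr_ge0 a) ad.
have [sa ca sra cra] := small_angle_bounds ad d2.
have [sb cb srb crb] := small_angle_bounds bd d2.
have d4 : d ^+ 4 <= 2 * d ^+ 3 by rewrite exprS ler_wpM2r ?exprn_ge0.
have nM (u v U V : R) : `|u| <= U -> `|v| <= V -> `|u * v| <= U * V.
  by move=> uU vV; rewrite normrM ler_pM.
have nD := @ler_normD _ R.
(* X, Y, Z only involve Taylor remainders of sin and cos, hence are O(d^3). *)
pose X := (cos a - 1 + a ^+ 2 / 2) + (cos b - 1 + b ^+ 2 / 2)
  + (cos a - 1) * (cos b - 1).
pose Y := (sin a - a) + (sin b - b) + (cos a - 1) * sin b + (cos b - 1) * sin a.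
pose Z := (sin a - a) * sin b + a * (sin b - b).
have -> : - ((c * cos a - s * sin a) * (c * cos b - s * sin b))
    - 2^-1 * s ^+ 2 * (a - b) ^+ 2 - (site_energy c s a + site_energy c s b)
    = (- c ^+ 2) * X + (c * s) * Y + (- s ^+ 2) * Z.
  by rewrite /X /Y /Z /site_energy; field.
have hX : `|X| <= 6 * d ^+ 3.
  have := nM _ _ _ _ ca cb.
  have := nD (cos a - 1 + a ^+ 2 / 2) (cos b - 1 + b ^+ 2 / 2).
  have := nD (cos a - 1 + a ^+ 2 / 2 + (cos b - 1 + b ^+ 2 / 2))
    ((cos a - 1) * (cos b - 1)).
  rewrite /X -exprD /=; lra.
have hY : `|Y| <= 4 * d ^+ 3.
  have := nM _ _ _ _ ca sb; have := nM _ _ _ _ cb sa.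
  have := nD (sin a - a) (sin b - b).
  have := nD (sin a - a + (sin b - b)) ((cos a - 1) * sin b).
  have := nD (sin a - a + (sin b - b) + (cos a - 1) * sin b) ((cos b - 1) * sin a).
  rewrite /Y -exprSr; lra.
have hZ : `|Z| <= 4 * d ^+ 3.
  have := nM _ _ _ _ sra sb; have := nM _ _ _ _ ad srb.
  have := nD ((sin a - a) * sin b) (a * (sin b - b)).
  rewrite /Z -exprSr -exprS; lra.
have c2 : `|- c ^+ 2| <= 1.
  by rewrite normrN ger0_norm ?sqr_ge0 //; have := sqr_ge0 s; lra.
have s2 : `|- s ^+ 2| <= 1.
  by rewrite normrN ger0_norm ?sqr_ge0 //; have := sqr_ge0 c; lra.
have cs : `|c * s| <= 1.
  rewrite -[1](@sqrtr1 R) -sqrtr_sqr ler_sqrt ?sqr_ge0 //.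
  have := sqr_ge0 (c - s); rewrite exprMn; nra.
have wX := nM _ _ _ _ c2 hX; have wY := nM _ _ _ _ cs hY; have wZ := nM _ _ _ _ s2 hZ.
have := nD ((- c ^+ 2) * X) ((c * s) * Y).
have := nD ((- c ^+ 2) * X + (c * s) * Y) ((- s ^+ 2) * Z).
lra.
Qed.

(* A z-bond at angle [th] is an x-bond at angle [th - pi/2]; [frame] records
   the corresponding rotated coordinates of e(th). *)
Definition frame (isx : bool) th : R * R :=
  if isx then (cos th, sin th) else (sin th, - cos th).

Definition frame_energy isx th a : R :=
  site_energy (frame isx th).1 (frame isx th).2 a.

Lemma frame_energyNb isx th a :
  frame_energy isx th a + frame_energy (~~ isx) th a = - 2^-1.
Proof.
have E c s :
    c ^+ 2 + s ^+ 2 = 1 -> site_energy c s a + site_energy s (- c) a = - 2^-1.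
  by move=> cs1; rewrite site_energy_rot cs1 mulN1r.
by case: isx; last rewrite addrC; rewrite /frame_energy /= E // cos2Dsin2.
Qed.

Lemma frame_norm isx th : (frame isx th).1 ^+ 2 + (frame isx th).2 ^+ 2 = 1.
Proof. by case: isx; rewrite /= ?sqrrN; [|rewrite addrC]; exact: cos2Dsin2. Qed.

Lemma bond_evecD isx th a b :
  bond isx (evec (th + a)) (evec (th + b)) =
    ((frame isx th).1 * cos a - (frame isx th).2 * sin a)
    * ((frame isx th).1 * cos b - (frame isx th).2 * sin b).
Proof. by case: isx; rewrite /bond /evec /= ?cosD ?sinD; ring. Qed.

Lemma gw_frame isx th : gw isx th = (frame isx th).2 ^+ 2.
Proof. by case: isx; rewrite //= sqrrN. Qed.

Definition bond_residual isx th a b : R :=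
  - bond isx (evec (th + a)) (evec (th + b)) - 2^-1 * gw isx th * (a - b) ^+ 2
  - (frame_energy isx th a + frame_energy isx th b).

Lemma abs_bond_residual_le isx th a b d :
  `|a| <= d -> `|b| <= d -> d <= 2 -> `|bond_residual isx th a b| <= 14 * d ^+ 3.
Proof.
by rewrite /bond_residual bond_evecD gw_frame; apply/bond_expansion/frame_norm.
Qed.

End BondExpansion.

Section TorusSums.
Variables (N : nat) (V : nmodType).
Hypothesis N_even : ~~ odd N.

Lemma odd_ordS (i : 'I_N) : odd (ordS i) = ~~ odd i.
Proof.
case: i => k /=; rewrite leq_eqVlt => /orP[/eqP kN|kN]; last by rewrite modn_small.
by rewrite kN modnn; move: N_even; rewrite -kN /= => /negbNE ->.
Qed.

Lemma nb1_inj : injective (@nb1 N).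
Proof.
by apply: (can_inj (g := fun r => (ord_pred r.1, r.2))) => -[i j]; rewrite /= ordSK.
Qed.

Lemma nb2_inj : injective (@nb2 N).
Proof.
by apply: (can_inj (g := fun r => (r.1, ord_pred r.2))) => -[i j]; rewrite /= ordSK.
Qed.

Lemma sum_nb1 (F : bool -> site N -> V) :
  \sum_(r : site N) F (xedge1 r) (nb1 r) = \sum_(r : site N) F (~~ xedge1 r) r.
Proof.
rewrite [RHS](reindex_inj nb1_inj); apply: eq_bigr => r _.
by rewrite /xedge1 /= odd_ordS negbK.
Qed.

Lemma sum_nb2 (F : bool -> site N -> V) :
  \sum_(r : site N) F (xedge2 r) (nb2 r) = \sum_(r : site N) F (~~ xedge2 r) r.
Proof.
rewrite [RHS](reindex_inj nb2_inj); apply: eq_bigr => r _.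
by rewrite /xedge2 /= odd_ordS negbK.
Qed.

(* Each site is the left end of one bond in each direction and the right end
   of the previous bond, which has the other type since parities alternate. *)
Lemma sum_bond_site_terms (f : bool -> site N -> V) (k : V) :
  (forall b r, f b r + f (~~ b) r = k) ->
  \sum_(r : site N) (f (xedge1 r) r + f (xedge1 r) (nb1 r)
                     + (f (xedge2 r) r + f (xedge2 r) (nb2 r)))
  = k *+ 2 *+ (N * N).
Proof.
move=> fk; rewrite !big_split /= sum_nb1 sum_nb2.
rewrite -!big_split /=; under eq_bigr do rewrite !fk.
by rewrite sumr_const card_prod !card_ord mulr2n.
Qed.

End TorusSums.

Lemma HN_GN_residual (R : realType) N (J th : R) (vt : site N -> R) : ~~ odd N ->
  HN J (fun r => evec (th + vt r)) + J * (N * N)%:R - J * GN th vt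
  = J * \sum_(r : site N) (bond_residual (xedge1 r) th (vt r) (vt (nb1 r))
                          + bond_residual (xedge2 r) th (vt r) (vt (nb2 r))).
Proof.
move=> N_even.
have site_terms := sum_bond_site_terms (f := fun b r => frame_energy b th (vt r))
  N_even (fun b r => frame_energyNb b th (vt r)).
rewrite /HN /GN; set B := \sum_r _; set Q := \sum_r _.
have -> : \sum_(r : site N) (bond_residual (xedge1 r) th (vt r) (vt (nb1 r))
                          + bond_residual (xedge2 r) th (vt r) (vt (nb2 r)))
    = - B - 2^-1 * Q - (- 2^-1 *+ 2 *+ (N * N)).
  rewrite -site_terms /B /Q mulr_sumr -sumrN -!sumrB; apply: eq_bigr => r _.
  have E (b1 b2 g1 g2 d1 d2 e1 e2 : R) :
      (- b1 - 2^-1 * g1 * d1 - e1) + (- b2 - 2^-1 * g2 * d2 - e2)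
      = - (b1 + b2) - 2^-1 * (g1 * d1 + g2 * d2) - (e1 + e2) by ring.
  exact: E.
by rewrite -[_ *+ (N * N)]mulr_natr -[_ *+ 2]mulr_natr; field.
Qed.

Theorem lemma4p4 (R : realType) (J : R) (hJ : 0 < J) :
  exists c : R, 0 < c /\
    forall (N : nat) (theta Delta : R) (vt : site N -> R),
      (0 < N)%N -> ~~ odd N -> Delta < 1 ->
      (forall r, - pi < vt r <= pi) ->
      (forall r, dist2 (evec (theta + vt r)) (evec theta) < Delta) ->
      `| HN J (fun r => evec (theta + vt r)) + J * (N * N)%:R
         - J * GN theta vt |
        <= c * J * (N * N)%:R * Delta ^+ 3.
Proof.
exists 224; split => // N th D vt _ N_even D1 vt_range vt_close.
have vt_le r : `|vt r| <= 2 * D := abs_le_dist2_evec (vt_range r) D1 (vt_close r).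
have D2 : 2 * D <= 2 by lra.
have edge_le r : `|bond_residual (xedge1 r) th (vt r) (vt (nb1 r))
                   + bond_residual (xedge2 r) th (vt r) (vt (nb2 r))| <= 224 * D ^+ 3.
  apply: le_trans (ler_normD _ _) _.
  have := abs_bond_residual_le (xedge1 r) th (vt_le r) (vt_le (nb1 r)) D2.
  have := abs_bond_residual_le (xedge2 r) th (vt_le r) (vt_le (nb2 r)) D2.
  rewrite exprMn; lra.
rewrite HN_GN_residual // normrM gtr0_norm //.
rewrite (_ : 224 * J * _ * _ = J * (224 * D ^+ 3 *+ (N * N))); last first.
  by rewrite -mulr_natr; ring.
rewrite ler_pM2l //; apply: le_trans (ler_norm_sum _ _ _) _.
apply: le_trans (ler_sum _ (fun r _ => edge_le r)) _.
by rewrite sumr_const card_prod !card_ord.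
Qed.
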